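(* Let $U$ be a reflexive separable Banach space, let $\xi\sim\mathcal N(0,\Sigma)$ be a centered $m$-dimensional Gaussian random vector with covariance matrix $\Sigma$, and let $g\colon U\times\mathbb R^m\to\mathbb R$ be locally Lipschitzian and jointly convex in both variables $(u,z)$. Let $\bar u\in U$ satisfy $g(\bar u,0)<0$ and assume that the set $M:=\{z\in\mathbb R^m\mid g(\bar u,z)\le 0\}$ is bounded. Let $\mathcal N(\bar u)$ be an open neighborhood of $\bar u$ such that $g(u,0)<0$ for all $u\in\mathcal N(\bar u)$. Then for each $v\in\mathbb S^{m-1}$ the function $u\mapsto -e(u,v)$ is Clarke regular on $\mathcal N(\bar u)$, where $e$ is the radial probability function defined below.
   Context: $\Sigma^{1/2}$ denotes a root of $\Sigma$. The radial probability function $e\colon U\times\mathbb S^{m-1}\to\mathbb R$ is $e(u,v):=\mu_\eta\{r\ge 0\mid g(u,r\Sigma^{1/2}v)\le 0\}$, where $\mu_\eta$ is the one-dimensional chi distribution with $m$ degrees of freedom and $\mathbb S^{m-1}$ is the unit sphere in $\mathbb R^m$. A locally Lipschitzian function is Clarke regular at a point if for every direction its ordinary directional derivative exists there and coincides with its Clarke generalized directional derivative; it is Clarke regular on a set if it is so at each point of the set. *)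

From HB Require Import structures.
From mathcomp Require Import all_boot all_order all_algebra.
From mathcomp Require Import all_classical all_reals all_analysis.
Set Implicit Arguments. Unset Strict Implicit. Unset Printing Implicit Defensive.
Import Order.TTheory GRing.Theory Num.Theory.
Import numFieldNormedType.Exports.
Local Open Scope classical_set_scope.
Local Open Scope ring_scope.

Section Defs.
Variable R : realType.

Definition separable_space (U : normedModType R) : Prop :=
  exists D : set U, countable D /\ (forall (u : U) (e : R), 0 < e ->
    exists2 d, D d & `|u - d| < e).

Definition cont_lin_functional (U : normedModType R) (phi : U -> R) : Prop :=
  (forall (a : R) (x y : U), phi (a *: x + y) = a * phi x + phi y) /\
  continuous phi.

(* Reflexivity: every bounded linear functional Phi on the dual U^*
   (equipped with the operator norm) is the evaluation at some u in U.
   "K bounds phi in operator norm" is written |phi u| <= K |u| for all u. *)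
Definition reflexive_space (U : normedModType R) : Prop :=
  forall Phi : (U -> R) -> R,
    (forall (a : R) (phi psi : U -> R), cont_lin_functional phi ->
       cont_lin_functional psi ->
       Phi (fun x => a * phi x + psi x) = a * Phi phi + Phi psi) ->
    (exists C : R, forall (phi : U -> R) (K : R), cont_lin_functional phi ->
       (forall u, `|phi u| <= K * `|u|) -> `|Phi phi| <= C * K) ->
    exists u : U, forall phi, cont_lin_functional phi -> Phi phi = phi u.

Definition locally_lipschitz2 (U V : normedModType R) (g : U -> V -> R) :=
  forall (u0 : U) (z0 : V), exists2 e : R, 0 < e & exists K : R,
    forall u1 u2 z1 z2, `|u1 - u0| < e -> `|u2 - u0| < e ->
      `|z1 - z0| < e -> `|z2 - z0| < e ->
      `|g u1 z1 - g u2 z2| <= K * (`|u1 - u2| + `|z1 - z2|).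

Definition jointly_convex (U V : normedModType R) (g : U -> V -> R) :=
  forall (u1 u2 : U) (z1 z2 : V) (t : R), 0 <= t <= 1 ->
    g (t *: u1 + (1 - t) *: u2) (t *: z1 + (1 - t) *: z2)
      <= t * g u1 z1 + (1 - t) * g u2 z2.

Definition unit_sphere (m : nat) : set 'cV[R]_m :=
  [set v | \sum_(i < m) (v i 0) ^+ 2 = 1].

Definition chi_density (m : nat) (r : R) : R :=
  r ^+ m.-1 * expR (- (r ^+ 2) / 2).

Definition chi_prob (m : nat) (A : set R) : R :=
  fine (\int[lebesgue_measure]_(r in A `&` [set r | 0 <= r]) (chi_density m r)%:E)
  / fine (\int[lebesgue_measure]_(r in [set r : R | 0 <= r]) (chi_density m r)%:E).

(* radial probability function e(u,v) = mu_eta {r >= 0 | g(u, r Sigma^{1/2} v) <= 0},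
   where L plays the role of the root Sigma^{1/2} (Sigma = L L^T) *)
Definition radial_prob (U : normedModType R) (m : nat) (L : 'M[R]_m)
    (g : U -> 'cV[R]_m -> R) (u : U) (v : 'cV[R]_m) : R :=
  chi_prob m [set r | 0 <= r /\ g u (r *: (L *m v)) <= 0].

Definition lipschitz_near (U : normedModType R) (f : U -> R) (x : U) :=
  exists2 e : R, 0 < e & exists K : R, forall y1 y2,
    `|y1 - x| < e -> `|y2 - x| < e -> `|f y1 - f y2| <= K * `|y1 - y2|.

(* Clarke generalised directional derivative
   f°(x; h) = limsup_{y -> x, t downarrow 0} (f(y + t h) - f y) / t *)
Definition clarke_dd (U : normedModType R) (f : U -> R) (x h : U) : \bar R :=
  ereal_inf [set ereal_sup
               [set ((f (yt.1 + yt.2 *: h) - f yt.1) / yt.2)%:E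
               | yt in [set yt : U * R | `|yt.1 - x| < d /\ 0 < yt.2 < d]]
            | d in [set d : R | 0 < d]].

Definition clarke_regular_at (U : normedModType R) (f : U -> R) (x : U) :=
  lipschitz_near f x /\
  forall h : U, exists d : R,
    ((fun t : R => (f (x + t *: h) - f x) / t) @ 0^'+ --> d) /\
    clarke_dd f x h = d%:E.

Definition clarke_regular_on (U : normedModType R) (f : U -> R) (N : set U) :=
  forall x, N x -> clarke_regular_at f x.

End Defs.

(* Put w := L v and S(u) := {r >= 0 | g(u, r w) <= 0}, so that e(u, v) is the
   chi measure of S(u).  Joint convexity of g makes each S(u) an interval
   containing 0 and makes rho(u) := sup S(u) concave in u; continuity of g puts
   rho(u) in S(u).  If S(x) is unbounded, then S(u) = [0, oo) near x and
   u |-> e(u, v) is locally constant.  Otherwise -rho is convex and bounded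
   above near x, hence locally Lipschitz, and -e(u, v) = Phi(-rho(u)) with
   Phi(s) = -F(-s), F the chi distribution function, strictly differentiable
   with a nonnegative derivative.  Difference quotients of a convex Lipschitz
   function are monotone in the step, which gives Clarke regularity, and the
   chain rule for a strictly differentiable outer function with nonnegative
   derivative preserves it. *)

From HB Require Import structures.
From mathcomp Require Import all_boot all_order all_algebra.
From mathcomp Require Import all_classical all_reals all_analysis.
From mathcomp Require Import ring lra.
Set Implicit Arguments.
Unset Strict Implicit.
Unset Printing Implicit Defensive.
Import Order.TTheory GRing.Theory Num.Theory.
Import numFieldNormedType.Exports.
Local Open Scope classical_set_scope.
Local Open Scope ring_scope.

Section NormBall.
Variables (R : realType) (U : normedModType R).

Lemma ball_convex_comb (x y1 y2 : U) (d t : R) :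
  `|y1 - x| < d -> `|y2 - x| < d -> 0 <= t <= 1 ->
  `|t *: y1 + (1 - t) *: y2 - x| < d.
Proof.
move=> h1 h2 /andP[t0 t1].
have -> : t *: y1 + (1 - t) *: y2 - x = t *: (y1 - x) + (1 - t) *: (y2 - x).
  by rewrite !scalerBr addrACA -opprD -scalerDl [t + _]addrC subrK scale1r.
apply: le_lt_trans (ler_normD _ _) _; rewrite !normrZ !ger0_norm ?subr_ge0 //.
have [->|t_neq0] := eqVneq t 0; first by rewrite mul0r add0r subr0 mul1r.
have t_gt0 : 0 < t by rewrite lt_def t_neq0.
have : t * `|y1 - x| < t * d by rewrite ltr_pM2l.
have : (1 - t) * `|y2 - x| <= (1 - t) * d by apply: ler_wpM2l; [lra|exact: ltW].
lra.
Qed.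

Lemma ball_shift_small (x y k : U) (r t : R) : 0 < r ->
  `|y - x| < r / (`|k| + 1) -> 0 <= t < r / (`|k| + 1) ->
  `|y - x| < r /\ `|y + t *: k - x| < r.
Proof.
move=> r0 yx /andP[t0 tr]; have k1 : 0 < `|k| + 1 by rewrite ltr_wpDl.
have r1 : r / (`|k| + 1) <= r by rewrite ler_pdivrMr // ler_peMr ?lerDr // ltW.
split; first exact: lt_le_trans yx r1.
rewrite addrAC; apply: le_lt_trans (ler_normD _ _) _; rewrite normrZ ger0_norm //.
have : t * `|k| <= r / (`|k| + 1) * `|k| by apply: ler_wpM2r => //; exact: ltW.
have : r / (`|k| + 1) * `|k| + r / (`|k| + 1) = r by field; rewrite gt_eqF.
lra.
Qed.

Lemma midpoint_reflect (x y : U) : 2^-1 *: y + (1 - 2^-1) *: (x + (x - y)) = x.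
Proof.
have -> : 1 - 2^-1 = 2^-1 :> R by field.
rewrite -scalerDr addrCA subrKC -mulr2n -scalerMnr.
by rewrite -scaler_nat scalerA mulfV ?pnatr_eq0 // scale1r.
Qed.

Lemma open_norm_ball (N : set U) (x : U) :
  open N -> N x -> exists2 d : R, 0 < d & forall y, `|y - x| < d -> N y.
Proof.
move=> oN Nx; have /nbhs_ballP[d d0 Hd] : nbhs x N by rewrite openE in oN; exact: oN.
by exists d => // y yx; apply: Hd; rewrite -ball_normE /= distrC.
Qed.

End NormBall.

Section StrictDerivability.
Variable R : realType.
Implicit Types (Phi D : R -> R) (a c : R).

Definition strictly_derivable Phi a c :=
  forall e, 0 < e -> exists2 tau, 0 < tau & forall s1 s2,
    `|s1 - a| < tau -> `|s2 - a| < tau ->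
    `|Phi s2 - Phi s1 - c * (s2 - s1)| <= e * `|s2 - s1|.

Lemma strictly_derivable_mvt Phi D a (eta : R) : 0 < eta -> {for a, continuous D} ->
  (forall s1 s2, `|s1 - a| < eta -> `|s2 - a| < eta -> s1 <= s2 ->
     exists2 xi, s1 <= xi <= s2 & Phi s2 - Phi s1 = D xi * (s2 - s1)) ->
  strictly_derivable Phi a (D a).
Proof.
move=> eta0 Dcont Dmvt e e0.
have /cvgrPdist_lt/(_ e e0)/nbhs_ballP[g g0 Dg] := Dcont.
exists (Num.min g eta) => [|s1 s2]; first by rewrite lt_min g0.
wlog s12 : s1 s2 / s1 <= s2 => [wlog_s12|].
  have [s12|/ltW s21] := leP s1 s2; first exact: wlog_s12.
  move=> h1 h2; rewrite (distrC s2).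
  rewrite (_ : _ - _ - _ = - (Phi s1 - Phi s2 - D a * (s1 - s2))) ?normrN; last by ring.
  exact: wlog_s12.
rewrite !lt_min => /andP[g1 eta1] /andP[g2 eta2].
have [xi /andP[xi1 xi2] ->] := Dmvt _ _ eta1 eta2 s12.
rewrite -mulrBl normrM ler_wpM2r // ltW // distrC; apply: Dg.
rewrite -ball_normE /= distrC.
move: g1 g2; rewrite !ltr_distl => /andP[? ?] /andP[? ?].
by apply/andP; split; lra.
Qed.

Lemma strictly_derivable_lipschitz Phi a c : strictly_derivable Phi a c ->
  exists2 tau, 0 < tau & forall s1 s2, `|s1 - a| < tau -> `|s2 - a| < tau ->
    `|Phi s2 - Phi s1| <= (`|c| + 1) * `|s2 - s1|.
Proof.
move=> /(_ 1 ltr01)[tau tau0 Phi_tau]; exists tau => // s1 s2 h1 h2.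
have := Phi_tau _ _ h1 h2; rewrite mul1r => H.
rewrite -[Phi s2 - Phi s1](subrK (c * (s2 - s1))).
by apply: le_trans (ler_normD _ _) _; rewrite normrM; lra.
Qed.

End StrictDerivability.

Section ClarkeRegularity.
Variables (R : realType) (U : normedModType R).
Implicit Types (f : U -> R) (x y k : U).

Definition diffq f y k (t : R) := (f (y + t *: k) - f y) / t.

(* The first clause says f'(x; k) = l, the second that the Clarke derivative
   f°(x; k) is at most l. *)
Definition dir_regular f x k (l : R) :=
  (forall e, 0 < e -> exists2 g, 0 < g &
     forall t, 0 < t < g -> `|diffq f x k t - l| <= e) /\
  (forall e, 0 < e -> exists2 d, 0 < d &
     forall y t, `|y - x| < d -> 0 < t < d -> diffq f y k t <= l + e).

Lemma dir_regular_cvg f x k l : dir_regular f x k l -> diffq f x k @ 0^'+ --> l.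
Proof.
move=> [lim _]; apply/cvgrPdist_le => e e0.
have [g g0 Hg] := lim e e0; exists g => // t /= tg t0.
rewrite distrC; apply: Hg; rewrite t0 /=.
by move: tg; rewrite sub0r normrN gtr0_norm.
Qed.

Lemma dir_regular_clarke_dd f x k l : dir_regular f x k l -> clarke_dd f x k = l%:E.
Proof.
move=> [lim upper]; apply/eqP; rewrite eq_le; apply/andP; split.
- apply/lee_addgt0Pr => e e0; have [d d0 Hd] := upper e e0.
  apply: le_trans (ereal_inf_lbound _) _; first by exists d.
  apply: ge_ereal_sup => _ [[y t] /= [yd td] <-].
  by rewrite -EFinD lee_fin; exact: Hd.
- apply: le_ereal_inf_tmp => _ [d /= d0 <-].
  apply/lee_addgt0Pr => e e0; have [g g0 Hg] := lim e e0.
  set t := Num.min d g / 2.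
  have t0 : 0 < t by rewrite divr_gt0 // lt_min d0 g0.
  have [td tg] : t < d /\ t < g.
    by move: (ge_min d d g) (ge_min g d g); rewrite !lexx orbT /= /t; lra.
  apply: (@le_trans _ _ ((diffq f x k t)%:E + e%:E)).
    move: (Hg t); rewrite t0 tg => /(_ isT); rewrite ler_norml => /andP[H _].
    by rewrite -EFinD lee_fin; lra.
  rewrite leeD2r //; apply: ereal_sup_ubound; exists (x, t) => //=.
  by rewrite subrr normr0 t0 td.
Qed.

Lemma clarke_regular_atP f x : lipschitz_near f x ->
  (forall k, exists l, dir_regular f x k l) -> clarke_regular_at f x.
Proof.
move=> lip reg; split => // k; have [l kl] := reg k.
by exists l; split; [exact: dir_regular_cvg|exact: dir_regular_clarke_dd].
Qed.

Lemma clarke_regular_locally_constant f x (d : R) : 0 < d ->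
  (forall y, `|y - x| < d -> f y = f x) -> clarke_regular_at f x.
Proof.
move=> d0 fE; apply: clarke_regular_atP.
  exists d => //; exists 0 => y1 y2 y1x y2x.
  by rewrite !fE // subrr normr0 mul0r.
move=> k; set d' := d / (`|k| + 1).
have d'0 : 0 < d' by rewrite divr_gt0 ?ltr_wpDl.
have diffq0 y t : `|y - x| < d' -> 0 < t < d' -> diffq f y k t = 0.
  move=> yx /andP[t0 td].
  have [yd ytd] := ball_shift_small d0 yx (introT andP (conj (ltW t0) td)).
  by rewrite /diffq !fE // subrr mul0r.
have xx : `|x - x| < d' by rewrite subrr normr0.
exists 0; split => e e0; exists d' => //.
- by move=> t tI; rewrite diffq0 // subrr normr0 ltW.
- by move=> y t yx tI; rewrite diffq0 // add0r ltW.
Qed.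

End ClarkeRegularity.

Section ConvexOnBall.
Variables (R : realType) (U : normedModType R).
Implicit Types (h : U -> R) (x y : U).

Definition convex_on_ball h x (d : R) :=
  forall y1 y2 (t : R), `|y1 - x| < d -> `|y2 - x| < d -> 0 <= t <= 1 ->
  h (t *: y1 + (1 - t) *: y2) <= t * h y1 + (1 - t) * h y2.

Lemma convex_on_ballS h x (d d' : R) :
  d' <= d -> convex_on_ball h x d -> convex_on_ball h x d'.
Proof.
by move=> d'd hc y1 y2 t y1x y2x; apply: hc; [exact: lt_le_trans y1x d'd|
  exact: lt_le_trans y2x d'd].
Qed.

Section BoundedAbove.
Variables (h : U -> R) (x : U) (d M : R).
Hypotheses (d0 : 0 < d) (hconv : convex_on_ball h x d).
Hypothesis hM : forall y, `|y - x| < d -> h y <= M.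

Lemma convex_on_ball_ge y : `|y - x| < d -> 2 * h x - M <= h y.
Proof.
move=> yx; have y'x : `|x + (x - y) - x| < d by rewrite addrC addKr distrC.
have half01 : 0 <= (2^-1 : R) <= 1 by rewrite invr_ge0 ler0n invf_le1 ?ler1n.
have := hconv yx y'x half01; rewrite midpoint_reflect.
by have := hM y'x; lra.
Qed.

Lemma convex_on_ball_diff_le y1 y2 : `|y1 - x| < d / 2 -> `|y2 - x| < d / 2 ->
  h y2 - h y1 <= 4 * (M - h x) / d * `|y2 - y1|.
Proof.
move=> y1x y2x; have d2d : d / 2 < d by rewrite ltr_pdivrMr // ltr_pMr // ltr1n.
have [y1d y2d] := (lt_trans y1x d2d, lt_trans y2x d2d).
have Mx : h x <= M by apply: hM; rewrite subrr normr0.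
have lb := convex_on_ball_ge y1d.
have [->|ne] := eqVneq y2 y1; first by rewrite !subrr normr0 mulr0.
set n := `|y2 - y1|; have n0 : 0 < n by rewrite normr_gt0 subr_eq0.
set r := d / 2; have r0 : 0 < r by rewrite divr_gt0.
set l := n / (n + r).
(* y2 lies on the segment from y1 to the point z at distance r beyond y2 *)
set z := y2 + r / n *: (y2 - y1).
have zx : `|z - x| < d.
  rewrite /z addrAC; apply: le_lt_trans (ler_normD _ _) _.
  by rewrite normrZ gtr0_norm ?divr_gt0 // -/n divfK ?gt_eqF // /r; lra.
have l01 : 0 <= l <= 1.
  by rewrite divr_ge0 ?ler_pdivrMr ?mul1r /=; lra.
have zE : l *: z + (1 - l) *: y1 = y2.
  rewrite /z scalerDr scalerA (_ : l * (r / n) = 1 - l); last first.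
    by rewrite /l; field; rewrite !gt_eqF //; lra.
  by rewrite scalerBr -addrA subrK -scalerDl addrC subrK scale1r.
have := hconv zx y1d l01; rewrite zE => conv.
have lnr : l <= n / r.
  by rewrite /l ler_pM2l // lef_pV2 ?posrE; lra.
have : h y2 - h y1 <= l * (2 * (M - h x)).
  have : l * (h z - h y1) <= l * (2 * (M - h x)).
    by apply: ler_wpM2l; [case/andP: l01|have := hM zx; lra].
  by move: l01 => /andP[? ?]; nra.
move/le_trans; apply.
rewrite (_ : 4 * (M - h x) / d * n = n / r * (2 * (M - h x))); last first.
  by rewrite /r; field; rewrite gt_eqF.
by apply: ler_wpM2r => //; lra.
Qed.

Lemma convex_on_ball_lipschitz y1 y2 : `|y1 - x| < d / 2 -> `|y2 - x| < d / 2 ->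
  `|h y1 - h y2| <= 4 * (M - h x) / d * `|y1 - y2|.
Proof.
move=> y1x y2x; have := convex_on_ball_diff_le y1x y2x.
have := convex_on_ball_diff_le y2x y1x.
by rewrite (distrC y2 y1) ler_norml => ? ?; apply/andP; split; lra.
Qed.

End BoundedAbove.

Section ConvexDirectional.
Variables (h : U -> R) (x : U) (d K : R).
Hypotheses (d0 : 0 < d) (K0 : 0 <= K) (hconv : convex_on_ball h x d).
Hypothesis hlip : forall y1 y2, `|y1 - x| < d -> `|y2 - x| < d ->
  `|h y1 - h y2| <= K * `|y1 - y2|.

Lemma diffq_convex_mono k y (t s : R) : `|y - x| < d -> `|y + s *: k - x| < d ->
  0 < t -> t <= s -> diffq h y k t <= diffq h y k s.
Proof.
move=> yx ysx t0 ts; have s0 : 0 < s := lt_le_trans t0 ts.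
have ts01 : 0 <= t / s <= 1.
  by rewrite divr_ge0 ?(ltW t0) ?(ltW s0) //= ler_pdivrMr // mul1r.
have := hconv ysx yx ts01.
have -> : t / s *: (y + s *: k) + (1 - t / s) *: y = y + t *: k.
  rewrite scalerDr scalerA divfK ?gt_eqF // scalerBl scale1r.
  by rewrite addrC addrA subrK.
move=> conv; rewrite /diffq ler_pdivrMr //.
rewrite (_ : (h (y + s *: k) - h y) / s * t = t / s * (h (y + s *: k) - h y)); last by ring.
by move: ts01 => /andP[? ?]; nra.
Qed.

Lemma diffq_lipschitz_bound k y (t : R) : `|y - x| < d -> `|y + t *: k - x| < d ->
  0 < t -> `|diffq h y k t| <= K * `|k|.
Proof.
move=> yx ytx t0; rewrite /diffq normrM normfV (gtr0_norm t0) ler_pdivrMr //.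
apply: le_trans (hlip ytx yx) _.
by rewrite addrC addKr normrZ (gtr0_norm t0) mulrA mulrAC.
Qed.

Lemma diffq_lipschitz_dist k y (s : R) : `|y - x| < d -> `|y + s *: k - x| < d ->
  `|x + s *: k - x| < d -> 0 < s ->
  diffq h y k s - diffq h x k s <= 2 * K * `|y - x| / s.
Proof.
move=> yx ysx xsx s0; rewrite /diffq -mulrBl ler_pM2r ?invr_gt0 //.
have xx : `|x - x| < d by rewrite subrr normr0.
have := hlip ysx xsx; have := hlip yx xx.
rewrite (_ : y + s *: k - (x + s *: k) = y - x); last by rewrite opprD addrACA subrr addr0.
by rewrite !ler_norml => /andP[? ?] /andP[? ?]; lra.
Qed.

Lemma convex_dir_regular k : exists l, dir_regular h x k l.
Proof.
set t0 := d / (`|k| + 1); have t0_gt0 : 0 < t0 by rewrite divr_gt0 ?ltr_wpDl.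
have xx : `|x - x| < t0 by rewrite subrr normr0.
have ball_x t : 0 < t < t0 -> `|x - x| < d /\ `|x + t *: k - x| < d.
  by case/andP=> /ltW t0' tt0; apply: ball_shift_small; rewrite ?t0'.
set Q := [set diffq h x k t | t in [set t | 0 < t < t0]].
have Q_inf : has_inf Q.
  split; first by exists (diffq h x k (t0 / 2)), (t0 / 2) => //=; lra.
  exists (- (K * `|k|)) => _ [t tI <-]; have [xd xtd] := ball_x t tI.
  have := diffq_lipschitz_bound xd xtd (andP tI).1.
  by rewrite ler_norml => /andP[].
set l := inf Q.
have l_le t : 0 < t < t0 -> l <= diffq h x k t.
  by move=> tI; apply: (ge_inf Q_inf.2); exists t.
have l_approx e : 0 < e -> exists2 s, 0 < s < t0 & diffq h x k s < l + e.
  by move=> e0; have [_ [s sI <-] Hs] := inf_adherent e0 Q_inf; exists s.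
exists l; split => e e0.
- have [s /andP[s0 st0] Hs] := l_approx e e0; exists s => // t /andP[t_gt0 ts].
  have tI : 0 < t < t0 by rewrite t_gt0 (lt_trans ts st0).
  have [xd xsd] := ball_x s (introT andP (conj s0 st0)).
  have := l_le t tI; have := diffq_convex_mono xd xsd t_gt0 (ltW ts).
  by rewrite ler_norml => ? ?; apply/andP; split; lra.
(* Near x, a quotient with step t is at most the one with a fixed larger step s,
   and the latter moves Lipschitz-continuously with the base point. *)
- have e2 : 0 < e / 2 by rewrite divr_gt0.
  have [s /andP[s0 st0] Hs] := l_approx _ e2.
  have K1 : 0 < 4 * K + 1 by rewrite ltr_wpDl ?mulr_ge0.
  have es : 0 < e * s / (4 * K + 1) by rewrite !divr_gt0 ?mulr_gt0.
  exists (Num.min s (e * s / (4 * K + 1))); first by rewrite lt_min s0.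
  move=> y t; rewrite !lt_min => /andP[ys yes] /andP[t_gt0 /andP[ts _]].
  have sI : 0 <= s < t0 by rewrite (ltW s0) st0.
  have [yd ysd] := ball_shift_small d0 (lt_trans ys st0) sI.
  have [_ xsd] := ball_x s (introT andP (conj s0 st0)).
  have := diffq_convex_mono yd ysd t_gt0 (ltW ts).
  have := diffq_lipschitz_dist yd ysd xsd s0.
  have : 2 * K * `|y - x| / s <= e / 2.
    rewrite ler_pdivrMr //; move: yes; rewrite ltr_pdivlMr //.
    by move: (K0) (normr_ge0 (y - x)) => ? ?; nra.
  lra.
Qed.

End ConvexDirectional.
End ConvexOnBall.

Section Composition.
Variables (R : realType) (U : normedModType R).
Variables (f h : U -> R) (Phi : R -> R) (x : U) (d K c : R).
Hypotheses (d0 : 0 < d) (K0 : 0 <= K) (c0 : 0 <= c).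
Hypothesis fE : forall y, `|y - x| < d -> f y = Phi (h y).
Hypothesis hlip : forall y1 y2, `|y1 - x| < d -> `|y2 - x| < d ->
  `|h y1 - h y2| <= K * `|y1 - y2|.
Hypothesis Phi_strict : strictly_derivable Phi (h x) c.

Lemma lipschitz_near_ball (tau : R) : 0 < tau -> exists2 r, 0 < r &
  forall y, `|y - x| < r -> `|y - x| < d /\ `|h y - h x| < tau.
Proof.
move=> tau0; have K1 : 0 < K + 1 by rewrite ltr_wpDl.
exists (Num.min d (tau / (K + 1))) => [|y]; first by rewrite lt_min d0 divr_gt0.
rewrite lt_min => /andP[yd ytau]; split => //.
have xx : `|x - x| < d by rewrite subrr normr0.
apply: le_lt_trans (hlip yd xx) _; move: ytau; rewrite ltr_pdivlMr //.
by move: (K0) (normr_ge0 (y - x)) => ? ?; nra.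
Qed.

Lemma comp_lipschitz_near : lipschitz_near f x.
Proof.
have [tau tau0 Phi_lip] := strictly_derivable_lipschitz Phi_strict.
have [r r0 hr] := lipschitz_near_ball tau0.
exists r => //; exists ((`|c| + 1) * K) => y1 y2 /hr[y1d h1] /hr[y2d h2].
rewrite !fE // -mulrA; apply: le_trans (Phi_lip _ _ h2 h1) _.
by rewrite ler_pM2l ?ltr_wpDl //; exact: hlip.
Qed.

Lemma comp_diffq_near k (e : R) : 0 < e -> exists2 r, 0 < r &
  forall y t, `|y - x| < r -> 0 < t < r ->
    `|diffq f y k t - c * diffq h y k t| <= e * (K * `|k|).
Proof.
move=> e0; have [tau tau0 Phi_tau] := Phi_strict e0.
have [r r0 hr] := lipschitz_near_ball tau0.
exists (r / (`|k| + 1)) => [|y t yr /andP[t0 tr]]; first by rewrite divr_gt0 ?ltr_wpDl.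
have [/hr[yd hy] /hr[ytd hyt]] := ball_shift_small r0 yr (introT andP (conj (ltW t0) tr)).
rewrite /diffq !fE // mulrA -mulrBl normrM normfV (gtr0_norm t0).
rewrite ler_pdivrMr //; apply: le_trans (Phi_tau _ _ hy hyt) _.
rewrite -mulrA ler_pM2l //; apply: le_trans (hlip ytd yd) _.
by rewrite addrAC subrr add0r normrZ gtr0_norm // mulrA mulrAC.
Qed.

Lemma comp_dir_regular k (l : R) : dir_regular h x k l -> dir_regular f x k (c * l).
Proof.
move=> [h_lim h_upper]; have Kk : 0 <= K * `|k| by rewrite mulr_ge0.
set e1 := fun e : R => e / (K * `|k| + c + 1).
have Kc1 : 0 < K * `|k| + c + 1 := ltr_wpDl (addr_ge0 Kk c0) ltr01.
have e1_gt0 e : 0 < e -> 0 < e1 e by move=> e0; rewrite divr_gt0.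
have e1E e : 0 < e -> e1 e * (K * `|k|) + c * e1 e <= e.
  move=> e0; have : e1 e * (K * `|k| + c + 1) = e by rewrite /e1 divfK ?gt_eqF.
  by have := e1_gt0 e e0; lra.
(* Since c >= 0, upper bounds on diffq h transfer to c * diffq h. *)
split => e /[dup] e0 /e1_gt0 e1e.
- have [r r0 Hr] := comp_diffq_near k e1e; have [g g0 Hg] := h_lim _ e1e.
  exists (Num.min r g) => [|t /andP[t0]]; first by rewrite lt_min r0 g0.
  rewrite lt_min => /andP[tr tg]; have xx : `|x - x| < r by rewrite subrr normr0.
  rewrite -[diffq f x k t](subrK (c * diffq h x k t)) -addrA -mulrBr.
  apply: le_trans (ler_normD _ _) (le_trans _ (e1E e e0)).
  rewrite normrM (ger0_norm c0) lerD //; first exact: Hr x t xx (introT andP (conj t0 tr)).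
  by apply: ler_wpM2l => //; exact: Hg t (introT andP (conj t0 tg)).
- have [r r0 Hr] := comp_diffq_near k e1e; have [d' d'0 Hd] := h_upper _ e1e.
  exists (Num.min r d') => [|y t]; first by rewrite lt_min r0 d'0.
  rewrite !lt_min => /andP[yr yd] /andP[t0 /andP[tr td]].
  have := Hr y t yr (introT andP (conj t0 tr)); rewrite ler_norml => /andP[_ H].
  have := ler_wpM2l c0 (Hd y t yd (introT andP (conj t0 td))).
  by have := e1E e e0; lra.
Qed.

Lemma clarke_regular_comp :
  (forall k, exists l, dir_regular h x k l) -> clarke_regular_at f x.
Proof.
move=> h_reg; apply: clarke_regular_atP; first exact: comp_lipschitz_near.
by move=> k; have [l kl] := h_reg k; exists (c * l); exact: comp_dir_regular.
Qed.

End Composition.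

Section RadialSet.
Variables (R : realType) (U V : normedModType R) (g : U -> V -> R) (w : V).
Hypotheses (gconv : jointly_convex g) (glip : locally_lipschitz2 g).

(* radial_prob L g u v is chi_prob m (radial_set g (L *m v) u) by definition. *)
Definition radial_set (u : U) := [set r : R | 0 <= r /\ g u (r *: w) <= 0].

Lemma radial_set0 u : g u 0 <= 0 -> radial_set u 0.
Proof. by split; rewrite ?scale0r. Qed.

Lemma radial_set_convex_comb u1 u2 r1 r2 (t : R) :
  radial_set u1 r1 -> radial_set u2 r2 -> 0 <= t <= 1 ->
  radial_set (t *: u1 + (1 - t) *: u2) (t * r1 + (1 - t) * r2).
Proof.
move=> [r1_ge0 g1] [r2_ge0 g2] t01; have /andP[t0 t1] := t01.
split; first by rewrite addr_ge0 ?mulr_ge0 ?subr_ge0.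
have := gconv u1 u2 (r1 *: w) (r2 *: w) t01.
rewrite !scalerA -scalerDl => /le_trans; apply.
have : 0 <= 1 - t by rewrite subr_ge0.
by nra.
Qed.

Lemma radial_set_interval u (r s : R) :
  radial_set u 0 -> radial_set u s -> 0 <= r <= s -> radial_set u r.
Proof.
move=> S0 Ss /andP[r0 rs]; have [s0|s_neq0] := eqVneq s 0.
  by move: rs; rewrite s0 => /(conj r0)/andP/le_anti <-.
have s_gt0 : 0 < s by rewrite lt_def s_neq0; case: Ss.
have rs01 : 0 <= r / s <= 1.
  by rewrite divr_ge0 ?(ltW s_gt0) //= ler_pdivrMr // mul1r.
have := radial_set_convex_comb Ss S0 rs01.
by rewrite -scalerDl addrC subrK scale1r mulr0 addr0 divfK ?gt_eqF.
Qed.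

Lemma radial_continuous u (r0 c : R) : 0 < c -> exists2 d, 0 < d &
  forall r, `|r - r0| < d -> `|g u (r *: w) - g u (r0 *: w)| < c.
Proof.
move=> c0; have [e e0 [K HK]] := glip u (r0 *: w).
set m := Num.min e c; have m0 : 0 < m by rewrite lt_min e0.
have Kw : 0 < (`|K| + 1) * (`|w| + 1) by rewrite mulr_gt0 ?ltr_wpDl.
exists (m / ((`|K| + 1) * (`|w| + 1))) => [|r]; first by rewrite divr_gt0.
rewrite ltr_pdivlMr // => rr0.
set a := `|r *: w - r0 *: w|.
have aE : a = `|r - r0| * `|w| by rewrite /a -scalerBl normrZ.
have aK : a * (`|K| + 1) < m.
  apply: le_lt_trans rr0; rewrite aE.
  have := mulr_ge0 (normr_ge0 (r - r0)) (normr_ge0 K).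
  by have := normr_ge0 (r - r0); lra.
have [me mc] : m <= e /\ m <= c by split; rewrite ge_min lexx ?orbT.
have uu : `|u - u| < e by rewrite subrr normr0.
have r0r0 : `|r0 *: w - r0 *: w| < e by rewrite subrr normr0.
have a0 : 0 <= a := normr_ge0 _.
have ra : a < e by move: (normr_ge0 K) => ?; nra.
have := HK u u (r *: w) (r0 *: w) uu uu ra r0r0.
rewrite subrr normr0 add0r -/a => /le_lt_trans; apply.
by have /= := ler_wpM2r a0 (ler_norm K); lra.
Qed.

Lemma radial_set_sup u : radial_set u 0 -> has_ubound (radial_set u) ->
  radial_set u (sup (radial_set u)).
Proof.
move=> S0 Sub; have hs : has_sup (radial_set u) by split; first exists 0.
have rho_ge0 : 0 <= sup (radial_set u) by exact: ub_le_sup.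
split => //; set rho := sup _; rewrite leNgt; apply/negP => g_pos.
have [d d0 Hd] := radial_continuous u rho g_pos.
have [r Sr rd] := sup_adherent d0 hs; have rrho : r <= rho by exact: ub_le_sup.
have rd' : `|r - rho| < d by rewrite distrC ger0_norm ?subr_ge0 // ltrBlDl -ltrBlDr.
have := Hd r rd'; rewrite ltr_norml => /andP[+ _].
by case: Sr => _ gr; lra.
Qed.

Lemma radial_set_pos u : g u 0 < 0 -> exists2 r, 0 < r & radial_set u r.
Proof.
move=> gu0; have gu0' : 0 < - g u 0 by rewrite oppr_gt0.
have [d d0 Hd] := radial_continuous u 0 gu0'.
have d2 : 0 < d / 2 by rewrite divr_gt0.
exists (d / 2) => //; split; first exact: ltW.
have d2d : `|d / 2 - 0| < d by rewrite subr0 gtr0_norm // ltr_pdivrMr // ltr_pMr // ltr1n.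
by have := Hd _ d2d; rewrite scale0r ltr_norml => /andP[_]; lra.
Qed.

Lemma radial_set_reflect c y (r : R) :
  radial_set y r -> radial_set (c + (c - y)) 0 -> radial_set c (2^-1 * r).
Proof.
move=> Sr S0; have half01 : 0 <= (2^-1 : R) <= 1.
  by rewrite invr_ge0 ler0n invf_le1 ?ler1n.
by have := radial_set_convex_comb Sr S0 half01; rewrite midpoint_reflect mulr0 addr0.
Qed.

Lemma radial_setE u : radial_set u 0 -> has_ubound (radial_set u) ->
  radial_set u `&` [set r | 0 <= r] = [set` `[0, sup (radial_set u)]].
Proof.
move=> S0 Sub; apply/seteqP; split => r /=.
  by move=> [Sr _]; rewrite in_itv /= (ub_le_sup Sub Sr) andbT; case: Sr.
rewrite in_itv /= => rI; split; last by case/andP: rI.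
exact: radial_set_interval S0 (radial_set_sup S0 Sub) rI.
Qed.

Lemma radial_sup_gt0 u : g u 0 < 0 -> has_ubound (radial_set u) ->
  0 < sup (radial_set u).
Proof.
move=> gu0 Sub; have [r r0 Sr] := radial_set_pos gu0.
exact: lt_le_trans r0 (ub_le_sup Sub Sr).
Qed.

End RadialSet.

Section RadialNear.
Variables (R : realType) (U V : normedModType R) (g : U -> V -> R) (w : V).
Variables (x : U) (d : R).
Hypotheses (gconv : jointly_convex g) (glip : locally_lipschitz2 g).
Hypothesis g0_neg : forall y, `|y - x| < d -> g y 0 < 0.

Local Notation S := (radial_set g w).

Let S0 y : `|y - x| < d -> S y 0.
Proof. by move=> /g0_neg/ltW/radial_set0. Qed.

Lemma radial_set_ubound_near y : has_ubound (S x) -> `|y - x| < d ->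
  has_ubound (S y).
Proof.
move=> [b Sb] yx; exists (2 * b) => r Sr.
have y'x : `|x + (x - y) - x| < d by rewrite addrC addKr distrC.
have := Sb _ (radial_set_reflect gconv Sr (S0 y'x)).
by rewrite mulrC ler_pdivrMr // mulrC.
Qed.

Lemma radial_sup_concave : has_ubound (S x) ->
  convex_on_ball (fun y => - sup (S y)) x d.
Proof.
move=> Sub y1 y2 t y1x y2x t01.
have [Sub1 Sub2] := (radial_set_ubound_near Sub y1x, radial_set_ubound_near Sub y2x).
have Sub12 := radial_set_ubound_near Sub (ball_convex_comb y1x y2x t01).
have := radial_set_convex_comb gconv (radial_set_sup glip (S0 y1x) Sub1)
  (radial_set_sup glip (S0 y2x) Sub2) t01.
by move/(ub_le_sup Sub12); lra.
Qed.

Lemma radial_set_full_near y : ~ has_ubound (S x) -> `|y - x| < d / 2 ->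
  S y = [set r | 0 <= r].
Proof.
move=> Snub yx; apply/seteqP; split => r; first by case.
move=> /= r0; have [s Ss rs] : exists2 s, S x s & 2 * r < s.
  apply: contra_notP Snub => Sle; exists (2 * r) => s Ss.
  by rewrite leNgt; apply/negP => rs; apply: Sle; exists s.
have y'x : `|y + (y - x) - x| < d.
  rewrite addrAC; apply: le_lt_trans (ler_normD _ _) _; lra.
have yd : `|y - x| < d by move: (normr_ge0 (y - x)) => ?; lra.
have Sy := radial_set_reflect gconv Ss (S0 y'x).
apply: (radial_set_interval gconv (S0 yd) Sy).
by rewrite r0 /=; lra.
Qed.

End RadialNear.

Section ChiDistribution.
Variables (R : realType) (m : nat).

Definition chi_mass (s : R) : R :=
  fine (\int[lebesgue_measure]_(r in [set` `[0, s]]) (chi_density m r)%:E).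

Definition chi_norm : R :=
  fine (\int[lebesgue_measure]_(r in [set r : R | 0 <= r]) (chi_density m r)%:E).

Lemma chi_density_ge0 (r : R) : 0 <= r -> 0 <= chi_density m r.
Proof. by move=> r0; rewrite mulr_ge0 ?exprn_ge0 ?expR_ge0. Qed.

Lemma chi_density_continuous : continuous (@chi_density R m).
Proof.
move=> r; apply: cvgM; first exact: exprn_continuous.
apply: continuous_comp; last exact: continuous_expR.
by apply: cvgM; [apply: cvgN; exact: exprn_continuous|exact: cvg_cst].
Qed.

Lemma chi_norm_ge0 : 0 <= chi_norm.
Proof.
by apply/fine_ge0/integral_ge0 => r /= r0; rewrite lee_fin chi_density_ge0.
Qed.

Lemma chi_probE (A : set R) (s : R) : A `&` [set r | 0 <= r] = [set` `[0, s]] ->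
  chi_prob m A = chi_mass s / chi_norm.
Proof. by rewrite /chi_prob => ->. Qed.

Lemma chi_mass_mvt (p q : R) : 0 < p -> p <= q ->
  exists2 xi, p <= xi <= q & chi_mass q - chi_mass p = chi_density m xi * (q - p).
Proof.
move=> p0 pq.
have chi_mass_derive y : 0 < y ->
    derivable chi_mass y 1 /\ derive1 chi_mass y = chi_density m y.
  move=> y0; apply: continuous_FTC1_closed (ltr_pwDr ltr01 (lexx y)) _ y0 _.
    apply: continuous_compact_integrable; first exact: segment_compact.
    by apply: continuous_subspaceT => r; exact: chi_density_continuous.
  exact: chi_density_continuous.
have derive_pq y : y \in `]p, q[ -> is_derive y 1 chi_mass (chi_density m y).
  rewrite in_itv /= => /andP[py _]; have [dy dyE] := chi_mass_derive y (lt_trans p0 py).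
  by rewrite -dyE derive1E; exact: derivableP.
have cont_pq : {within `[p, q], continuous chi_mass}.
  apply: derivable_within_continuous => y; rewrite in_itv /= => /andP[py _].
  exact: (chi_mass_derive y (lt_le_trans p0 py)).1.
have [xi xiI E] := MVT_segment pq derive_pq cont_pq.
by exists xi; rewrite // -in_itv.
Qed.

Lemma chi_mass_opp_strictly_derivable (p : R) : 0 < p ->
  strictly_derivable (fun s => - (chi_mass (- s) / chi_norm)) (- p)
    (chi_density m p / chi_norm).
Proof.
move=> p0; rewrite -[p in chi_density m p]opprK.
apply: (strictly_derivable_mvt (D := fun s => chi_density m (- s) / chi_norm)
  (eta := p)) => // [|s1 s2 h1 h2 s12].
  apply: cvgM; last exact: cvg_cst.
  by apply: continuous_comp; [exact: opp_continuous|exact: chi_density_continuous].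
move: h1 h2; rewrite !ltr_distlC => /andP[? ?] /andP[? ?].
have s2_gt0 : 0 < - s2 by lra.
have s21 : - s2 <= - s1 by rewrite lerN2.
have [xi /andP[xi1 xi2] E] := chi_mass_mvt s2_gt0 s21.
exists (- xi); first by rewrite lerNr xi2 lerNl xi1.
have E' : chi_mass (- s1) - chi_mass (- s2) = chi_density m xi * (s2 - s1).
  by rewrite E; ring.
by rewrite [- - xi]opprK mulrAC -E'; ring.
Qed.

End ChiDistribution.

Arguments chi_norm {R} m.

Section RadialProbability.
Variables (R : realType) (U V : normedModType R) (m : nat) (g : U -> V -> R) (w : V).
Variables (x : U) (d : R).
Hypotheses (d0 : 0 < d) (gconv : jointly_convex g) (glip : locally_lipschitz2 g).
Hypothesis g0_neg : forall y, `|y - x| < d -> g y 0 < 0.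

Local Notation S := (radial_set g w).

Let xx : `|x - x| < d / 2.
Proof. by rewrite subrr normr0 divr_gt0. Qed.

Lemma radial_prob_regular_bounded : has_ubound (S x) ->
  clarke_regular_at (fun u => - chi_prob m (S u)) x.
Proof.
move=> Sub.
have d2d : d / 2 < d by rewrite ltr_pdivrMr // ltr_pMr // ltr1n.
have Sub_near y : `|y - x| < d -> has_ubound (S y).
  exact: (radial_set_ubound_near gconv g0_neg Sub).
have rho_ge0 y : `|y - x| < d -> 0 <= sup (S y).
  by move=> yx; apply/ltW/(radial_sup_gt0 glip (g0_neg yx) (Sub_near _ yx)).
have hconv := radial_sup_concave gconv glip g0_neg Sub.
have hle y : `|y - x| < d -> - sup (S y) <= 0 by move/rho_ge0; rewrite oppr_le0.
have hlip := convex_on_ball_lipschitz d0 hconv hle.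
have rho_x : 0 < sup (S x) := radial_sup_gt0 glip (g0_neg (lt_trans xx d2d)) Sub.
have K0 : 0 <= 4 * (0 - - sup (S x)) / d.
  by rewrite sub0r opprK divr_ge0 ?mulr_ge0 ?(ltW rho_x) ?(ltW d0).
have d2_gt0 : 0 < d / 2 by rewrite divr_gt0.
apply: (clarke_regular_comp (h := fun y => - sup (S y))
  (Phi := fun s => - (chi_mass m (- s) / chi_norm m))
  (c := chi_density m (sup (S x)) / chi_norm m) d2_gt0 K0 _ _ hlip).
- by rewrite divr_ge0 ?chi_norm_ge0 ?chi_density_ge0 ?(ltW rho_x).
- move=> y /lt_trans/(_ d2d) yx; rewrite opprK.
  have Sy0 := radial_set0 w (ltW (g0_neg yx)).
  by rewrite (chi_probE m (radial_setE gconv glip Sy0 (Sub_near _ yx))).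
- exact: chi_mass_opp_strictly_derivable.
- exact: convex_dir_regular d2_gt0 K0 (convex_on_ballS (ltW d2d) hconv) hlip.
Qed.

Lemma radial_prob_regular_unbounded : ~ has_ubound (S x) ->
  clarke_regular_at (fun u => - chi_prob m (S u)) x.
Proof.
move=> Snub; apply: (clarke_regular_locally_constant (d := d / 2)).
  by rewrite divr_gt0.
by move=> y yx; rewrite !(radial_set_full_near gconv g0_neg Snub).
Qed.

End RadialProbability.

Theorem lemma2p2 (R : realType) (U : completeNormedModType R) (m : nat)
  (Sigma L : 'M[R]_m) (g : U -> 'cV[R]_m -> R) (ubar : U) (N : set U) :
  reflexive_space U -> separable_space U ->
  Sigma = L *m L^T ->
  locally_lipschitz2 g -> jointly_convex g ->
  g ubar 0 < 0 ->
  bounded_set [set z : 'cV[R]_m | g ubar z <= 0] ->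
  open N -> N ubar -> (forall u, N u -> g u 0 < 0) ->
  forall v : 'cV[R]_m, unit_sphere v ->
    clarke_regular_on (fun u => - radial_prob L g u v) N.
Proof.
move=> _ _ _ glip gconv _ _ oN _ N_neg v _ x Nx.
have [d d0 Nd] := open_norm_ball oN Nx.
have g0_neg y : `|y - x| < d -> g y 0 < 0 by move/Nd/N_neg.
have [Sub|Snub] := pselect (has_ubound (radial_set g (L *m v) x)).
- exact: radial_prob_regular_bounded d0 gconv glip g0_neg Sub.
- exact: radial_prob_regular_unbounded d0 gconv g0_neg Snub.
Qed.
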